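(* Let $G$ be a finite simple directed graph. The edge set of $\mathcal TG$ can be partitioned into edge-disjoint simple cycles of $\mathcal TG$, each of which is mapped by $p$ bijectively onto a simple cycle of $G$. Moreover, if $C$ is a simple cycle of $G$ with vertex set $W$, the number of cycles of this partition lying above $C$ (i.e. mapped by $p$ onto $C$) equals the number of forests of $G$ rooted in $W$.
   Context: A spanning tree of a directed graph $G=(V,E)$ is a subgraph on all vertices with no cycle, one vertex (root) of outdegree $0$ and all others of outdegree $1$. For $W\subseteq V$ nonempty, a forest rooted in $W$ is a subgraph on all vertices, with no cycle, in which vertices of $W$ have outdegree $0$ and all others outdegree $1$. The tree graph $\mathcal TG$ has the spanning trees of $G$ as vertices; for a tree $\mathbf a$ rooted at $r$ and an edge $e$ with source $r$, let $\mathbf b$ be obtained by adding $e$ to $\mathbf a$ and deleting the edge of $\mathbf a$ going out of the target $t(e)$; then $\mathbf a\to\mathbf b$ is an edge of $\mathcal TG$. The projection $p$ maps each spanning tree to its root and each edge $\mathbf a\to\mathbf b$ of $\mathcal TG$ to the edge $e$ of $G$ used to construct it. A simple cycle is a closed path traversing each of its vertices and edges exactly once. *)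

From mathcomp Require Import all_boot.
Set Implicit Arguments. Unset Strict Implicit. Unset Printing Implicit Defensive.

(* A finite simple directed graph: vertex type V : finType, edge set
   E : {set V * V} (no multi-edges by construction), loopless assumed
   in the theorem.  An edge e = (source, target) = (e.1, e.2). *)

Section Graphs.
Variable V : finType.
Implicit Types (E A : {set V * V}) (W : {set V}).

Definition edge_rel A : rel V := fun x y => (x, y) \in A.

Definition outdeg A (v : V) : nat := #|[set y | (v, y) \in A]|.

Definition acyclic A : bool :=
  [forall x, forall y, ((x, y) \in A) ==> ~~ connect (edge_rel A) y x].

Definition forest E W A : bool :=
  [&& A \subset E, acyclic A & [forall v, outdeg A v == (if v \in W then 0 else 1)]].

Definition spanning_tree E A : bool := [exists r, forest E [set r] A].

(* edges of the tree graph TG: a pair (a, e) with a a spanning tree whose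
   root is the source of e (the root is its unique outdegree-0 vertex) *)
Definition TGedge E (x : {set V * V} * (V * V)) : bool :=
  [&& spanning_tree E x.1, x.2 \in E & outdeg x.1 x.2.1 == 0].

Definition TGtarget (x : {set V * V} * (V * V)) : {set V * V} :=
  (x.1 :\: [set f in x.1 | f.1 == x.2.2]) :|: [set x.2].

Definition proj (x : {set V * V} * (V * V)) : V * V := x.2.

Definition TG_simple_cycle E (s : seq ({set V * V} * (V * V))) : bool :=
  [&& s != [::], all (TGedge E) s,
      cycle (fun x y => TGtarget x == y.1) s & uniq (map fst s)].

Definition G_simple_cycle E (w : seq V) : bool :=
  [&& w != [::], uniq w & cycle (edge_rel E) w].

Definition cycle_edges (w : seq V) : {set V * V} := [set (x, next w x) | x in w].

End Graphs.

From mathcomp Require Import all_boot zify.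
Set Implicit Arguments. Unset Strict Implicit. Unset Printing Implicit Defensive.

(* Adding the edge e to the tree a rooted at s(e) gives the graph g = a + e
   ([unicycle]), in which every vertex has outdegree 1; so g is the union of
   a simple cycle C and a forest F rooted in the vertices of C.  Conversely,
   removing any edge f of C from such a g leaves a spanning tree rooted at
   s(f), so (g - f, f) is an edge of TG.  Hence the edges of TG are
   partitioned according to g into the classes {(g - f, f) | f in C}
   ([lift_cycle]).  Following the TG edge (g - f, f) leads to g - f', where f'
   is the edge of C after f, so each class is a simple cycle of TG over C, and
   the classes over a fixed C correspond to the forests F. *)

Section TreeGraph.
Variable V : finType.
Implicit Types (E A B C F g : {set V * V}) (W : {set V}) (w : seq V).

Lemma outdeg0P A v : reflect (forall y, (v, y) \notin A) (outdeg A v == 0).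
Proof.
rewrite /outdeg cards_eq0; apply: (iffP eqP) => [A0 y | vA].
  by apply/negP => vy; have := in_set0 y; rewrite -A0 inE vy.
by apply/setP => y; rewrite !inE (negbTE (vA y)).
Qed.

Lemma outdeg1P A v :
  reflect (exists y, forall z, ((v, z) \in A) = (z == y)) (outdeg A v == 1).
Proof.
rewrite /outdeg; apply: (iffP cards1P) => -[y Ay]; exists y.
  by move=> z; move/setP: Ay => /(_ z); rewrite !inE.
by apply/setP => z; rewrite !inE Ay.
Qed.

Lemma acyclic_of_rank A (h : V -> nat) :
  (forall x y, (x, y) \in A -> h y < h x) -> acyclic A.
Proof.
move=> hA; apply/forallP => x; apply/forallP => y; apply/implyP => xy.
apply/negP => /connectP [p pth lst].
have h_path : forall q z, path (edge_rel A) z q -> h (last z q) <= h z.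
  elim=> [//|z q IHq] z0 /= /andP [z0z zq].
  exact: leq_trans (IHq _ zq) (ltnW (hA _ _ z0z)).
by have := h_path _ _ pth; rewrite -lst leqNgt hA.
Qed.

Lemma rank_of_acyclic A :
  acyclic A -> exists h : V -> nat, forall x y, (x, y) \in A -> h y < h x.
Proof.
move=> Aacy; exists (fun x => #|[set z | connect (edge_rel A) x z]|) => x y xy.
apply/proper_card/properP; split.
  apply/subsetP => z; rewrite !inE; apply: connect_trans.
  exact: connect1.
exists x; first by rewrite inE connect0.
by rewrite inE; move/forallP: Aacy => /(_ x) /forallP /(_ y) /implyP; apply.
Qed.

Lemma acyclicS A B : A \subset B -> acyclic B -> acyclic A.
Proof.
move=> sAB /rank_of_acyclic [h hB]; apply: (@acyclic_of_rank _ h) => x y xy.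
exact/hB/(subsetP sAB).
Qed.

Lemma forest_connect_root E W F v :
  forest E W F -> exists2 r, r \in W & connect (edge_rel F) v r.
Proof.
case/and3P => _ /rank_of_acyclic [h hF] /forallP dF.
have step u : u \notin W -> exists y, (u, y) \in F.
  move=> uW; have := dF u; rewrite (negbTE uW) => /outdeg1P [y uy].
  by exists y; rewrite uy.
elim: {v} (h v) {-2}v (leqnn (h v)) => [|n IHn] v hv;
  case: (boolP (v \in W)) => [vW | /step [y vyF]];
  try by exists v => //; apply: connect0.
  by have := hF _ _ vyF; rewrite ltnNge (leq_trans hv).
have [r rW yr] := IHn y (leq_trans (hF _ _ vyF) hv).
by exists r => //; apply: connect_trans yr; apply: connect1.
Qed.

Lemma forest_sub E W F : forest E W F -> F \subset E.
Proof. by case/and3P. Qed.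

Lemma forest_acyclic E W F : forest E W F -> acyclic F.
Proof. by case/and3P. Qed.

Lemma forest1_outdeg0 E r A v : forest E [set r] A -> outdeg A v == 0 -> v = r.
Proof. by case/and3P => _ _ /forallP /(_ v) /eqP ->; rewrite inE; case: (v =P r). Qed.

Lemma forest_root_src E w F a b :
  forest E [set y in w] F -> (a, b) \in F -> a \notin w.
Proof.
case/and3P => _ _ /forallP dF ab; apply/negP => aw.
by have := dF a; rewrite inE aw => /outdeg0P /(_ b); rewrite ab.
Qed.

Lemma in_cycle_edges w a b :
  ((a, b) \in cycle_edges w) = (a \in w) && (b == next w a).
Proof.
apply/imsetP/andP => [[x xw [-> ->]] | [aw /eqP ->]]; last by exists a.
by rewrite xw.
Qed.

Lemma cycle_edges_neq0 w : w != [::] -> cycle_edges w != set0.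
Proof.
case: w => [//|u s] _; apply/set0Pn; exists (u, next (u :: s) u).
by rewrite in_cycle_edges mem_head eqxx.
Qed.

Lemma cycle_edges_rot w i : uniq w -> cycle_edges (rot i w) = cycle_edges w.
Proof. by move=> Uw; apply/setP => -[a b]; rewrite !in_cycle_edges mem_rot next_rot. Qed.

Lemma cycle_edges_subE A w :
  uniq w -> (cycle_edges w \subset A) = cycle (edge_rel A) w.
Proof.
move=> Uw; apply/subsetP/idP => [CA | Acyc [a b]].
  apply: (@sub_in_cycle _ (mem w) (fun x y => next w x == y)); last first.
  - exact: cycle_next.
  - exact/allP.
  by move=> x _ xw _ /eqP <-; apply: CA; rewrite in_cycle_edges xw eqxx.
by rewrite in_cycle_edges => /andP [aw /eqP ->]; apply: next_cycle Acyc aw.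
Qed.

Lemma G_simple_cycle_sub E w : G_simple_cycle E w -> cycle_edges w \subset E.
Proof. by case/and3P => _ Uw; rewrite cycle_edges_subE. Qed.

Lemma cycle_edges_mem w1 w2 : cycle_edges w1 = cycle_edges w2 -> w1 =i w2.
Proof.
have src w w' v : cycle_edges w = cycle_edges w' -> v \in w -> v \in w'.
  move=> ww' vw; have : (v, next w v) \in cycle_edges w'.
    by rewrite -ww' in_cycle_edges vw eqxx.
  by rewrite in_cycle_edges => /andP [].
by move=> e v; apply/idP/idP; apply: src.
Qed.

Lemma acyclicN_cycle_edges A w :
  w != [::] -> uniq w -> cycle_edges w \subset A -> ~~ acyclic A.
Proof.
case: w => [//|u s] _ Uw; rewrite cycle_edges_subE // => Acyc.
set w := u :: s; have uw : u \in w := mem_head u s.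
have uv : (u, next w u) \in A by apply: next_cycle Acyc uw.
apply/negP => /forallP /(_ u) /forallP /(_ (next w u)) /implyP /(_ uv) /negP; apply.
have [i s' ws] : rot_to_spec w (next w u) by apply: rot_to; rewrite mem_next.
have : cycle (edge_rel A) (next w u :: s') by rewrite -ws rot_cycle.
by move/path_connect; apply; rewrite -cats1 -cat_cons mem_cat -ws mem_rot uw.
Qed.

Lemma forest_disjoint_cycle_edges E w F :
  forest E [set y in w] F -> [disjoint F & cycle_edges w].
Proof.
move=> Fw; rewrite disjoint_subset; apply/subsetP => -[a b] /(forest_root_src Fw).
by rewrite inE in_cycle_edges => /negbTE ->.
Qed.

Lemma index_next (T : eqType) (u : T) (s : seq T) x :
  uniq (u :: s) -> x \in u :: s -> next (u :: s) x != u ->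
  index (next (u :: s) x) (u :: s) = (index x (u :: s)).+1.
Proof.
move=> Uw xw; rewrite next_nth xw.
have : index x (u :: s) < size (u :: s) by rewrite index_mem.
set i := index x (u :: s) => ilt.
have [ilts _ | iges] := ltnP i (size s); last by rewrite nth_default // eqxx.
by rewrite -[nth u s i]/(nth u (u :: s) i.+1) index_uniq.
Qed.

Lemma forest_cycle_acyclic E w F x :
  uniq w -> x \in w -> forest E [set y in w] F ->
  acyclic ((F :|: cycle_edges w) :\ (x, next w x)).
Proof.
move=> Uw xw Fw; have [i s ws] := rot_to xw.
rewrite -(cycle_edges_rot i Uw) -(next_rot i Uw) ws.
have {}Fw : forest E [set y in x :: s] F.
  suff -> : [set y in x :: s] = [set y in w] by [].
  by apply/setP => y; rewrite !in_set -ws mem_rot.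
have {xw ws}Uw : uniq (x :: s) by rewrite -ws rot_uniq.
set w' := x :: s in Uw Fw *.
have [hF hFF] := rank_of_acyclic (forest_acyclic Fw).
(* The rank decreases along the cycle broken just before x, and each forest
   vertex lies above the whole cycle. *)
apply: (@acyclic_of_rank _ (fun v => if v \in w' then
    (if v == x then 0 else size w' - index v w') else size w' + hF v)) => a b.
rewrite in_setD1 in_setU => /andP [ab_new /orP [abF | abC]].
  have aw := forest_root_src Fw abF; have := hFF _ _ abF.
  rewrite (negbTE aw); case: ifP => _; last by rewrite ltn_add2l.
  by case: ifP => _; lia.
move: abC ab_new; rewrite in_cycle_edges => /andP [aw /eqP ->] abx.
have ax : a != x by apply: contraNneq abx => ->.
have : index a w' < size w' by rewrite index_mem.
rewrite mem_next aw (negbTE ax); case: ifP => [_ | nax]; first by lia.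
by rewrite index_next ?nax // -/w'; lia.
Qed.

Definition functional A := forall v, outdeg A v == 1.

Lemma functional_eq g e1 e2 :
  functional g -> e1 \in g -> e2 \in g -> e1.1 = e2.1 -> e1 = e2.
Proof.
case: e1 e2 => a b [a' b'] gF ab ab' /= aa'; subst a'.
have /outdeg1P [y ay] := gF a.
by move: ab ab'; rewrite !ay => /eqP -> /eqP ->.
Qed.

Lemma functional_outdeg_setD1 g f v :
  functional g -> f \in g -> outdeg (g :\ f) v == (if v == f.1 then 0 else 1).
Proof.
case: f => a b gF ab /=; have /outdeg1P [y vy] := gF v.
case: (v =P a) => [va | /eqP va].
  apply/outdeg0P => z; rewrite in_setD1 vy; move: ab; rewrite -va vy.
  by move/eqP <-; rewrite xpair_eqE eqxx andNb.
by apply/outdeg1P; exists y => z; rewrite in_setD1 xpair_eqE (negbTE va) vy.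
Qed.

Lemma functional_outdeg_setD_cycle_edges g w v :
  functional g -> cycle_edges w \subset g ->
  outdeg (g :\: cycle_edges w) v == (if v \in w then 0 else 1).
Proof.
move=> gF Cg; have /outdeg1P [y vy] := gF v; case: ifP => vw.
  apply/outdeg0P => z; rewrite in_setD in_cycle_edges vw vy.
  have := subsetP Cg (v, next w v); rewrite in_cycle_edges vw eqxx vy.
  by move=> /(_ isT) /eqP <-; rewrite andNb.
by apply/outdeg1P; exists y => z; rewrite in_setD in_cycle_edges vw vy.
Qed.

Lemma forest_cycle_functional E w F :
  forest E [set y in w] F -> functional (F :|: cycle_edges w).
Proof.
case/and3P => _ _ /forallP dF v; apply/outdeg1P.
have := dF v; rewrite inE; case: ifP => vw.
  move/outdeg0P => vF; exists (next w v) => z.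
  by rewrite in_setU (negbTE (vF z)) in_cycle_edges vw.
by move/outdeg1P => [y vy]; exists y => z; rewrite in_setU vy in_cycle_edges vw orbF.
Qed.

Definition unicycle (x : {set V * V} * (V * V)) : {set V * V} := x.1 :|: [set x.2].

Definition lift_cycle F C : {set {set V * V} * (V * V)} :=
  [set ((F :|: C) :\ f, f) | f in C].

Lemma unicycle_lift F C f : f \in C -> unicycle ((F :|: C) :\ f, f) = F :|: C.
Proof. by move=> fC; rewrite /unicycle /= setUC setD1K // in_setU fC orbT. Qed.

Lemma proj_lift_cycle F C : [set proj x | x in lift_cycle F C] = C.
Proof. by rewrite -imset_comp imset_id. Qed.

Lemma proj_lift_cycle_inj F C : {in lift_cycle F C &, injective (@proj V)}.
Proof. by move=> _ _ /imsetP [f1 _ ->] /imsetP [f2 _ ->] /= ->. Qed.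

Lemma lift_cycle_inj F1 F2 C : C != set0 ->
  [disjoint F1 & C] -> [disjoint F2 & C] -> lift_cycle F1 C = lift_cycle F2 C ->
  F1 = F2.
Proof.
case/set0Pn => f fC d1 d2 e12.
have : ((F1 :|: C) :\ f, f) \in lift_cycle F2 C by rewrite -e12 imset_f.
case/imsetP => f' _ [eD ff']; subst f'.
have eU : F1 :|: C = F2 :|: C.
  by rewrite -(unicycle_lift F1 fC) -(unicycle_lift F2 fC) eD.
have setUDK F : [disjoint F & C] -> (F :|: C) :\: C = F.
  by move=> dF; rewrite setDUl setDv setU0; apply/setDidPl.
by rewrite -(setUDK _ d1) -(setUDK _ d2) eU.
Qed.

Lemma TGedge_src E x : TGedge E x -> x.1 = unicycle x :\ x.2.
Proof.
case: x => a [u t] /and3P [_ _ /outdeg0P ut].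
by rewrite /unicycle setUC setU1K //=; apply: ut.
Qed.

Lemma TGedge_functional E x : TGedge E x -> functional (unicycle x).
Proof.
case: x => a [u t] /and3P [/existsP [r Fr] _ /= u0] v.
have ur := forest1_outdeg0 Fr u0; move/outdeg0P: u0 => u0.
apply/outdeg1P; case: (v =P u) => [-> | /eqP vu].
  by exists t => z; rewrite !inE xpair_eqE eqxx (negbTE (u0 z)).
have /and3P [_ _ /forallP /(_ v)] := Fr; rewrite inE -ur (negbTE vu).
by move/outdeg1P => [y vy]; exists y => z; rewrite !inE xpair_eqE (negbTE vu) vy orbF.
Qed.

Lemma TGtarget_lift g f f' : functional g -> f \in g -> f' \in g ->
  f'.1 = f.2 -> f'.1 != f.1 -> TGtarget (g :\ f, f) = g :\ f'.
Proof.
move=> gF fg f'g f'f f'nf; have ff' : f != f' by apply: contra f'nf => /eqP <-.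
apply/setP => z; rewrite /TGtarget /= !inE.
have [-> | zf] := eqVneq z f; first by rewrite ff' fg orbT.
have [-> | zf'] := eqVneq z f'; first by rewrite f'g f'f eqxx.
rewrite /= orbF; case zg: (z \in g); rewrite ?andbF //= andbT.
apply/eqP => z1; move/eqP: zf'; apply.
by apply: functional_eq gF zg f'g _; rewrite z1 f'f.
Qed.

Section OverGraph.
Variable E : {set V * V}.
Hypothesis loopless : forall v : V, (v, v) \notin E.

Local Notation TGedges := [set x | TGedge E x].

Lemma TGedge_lift w F f : G_simple_cycle E w -> forest E [set y in w] F ->
  f \in cycle_edges w -> TGedge E ((F :|: cycle_edges w) :\ f, f).
Proof.
move=> Gw Fw; have /and3P [_ Uw _] := Gw.
case: f => x y; rewrite in_cycle_edges => /andP [xw /eqP ->].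
set g := F :|: cycle_edges w; set f := (x, next w x).
have gE : g \subset E by rewrite subUset (forest_sub Fw) G_simple_cycle_sub.
have gF := forest_cycle_functional Fw.
have fg : f \in g by rewrite in_setU in_cycle_edges xw eqxx orbT.
have degf v : outdeg (g :\ f) v == (if v == x then 0 else 1).
  exact: functional_outdeg_setD1.
rewrite /TGedge /=; apply/and3P; split; last by have := degf x; rewrite eqxx.
- apply/existsP; exists x; apply/and3P; split.
  + exact: subset_trans (subD1set _ _) gE.
  + exact: forest_cycle_acyclic Uw xw Fw.
  + by apply/forallP => v; rewrite inE degf.
- exact: subsetP gE _ fg.
Qed.

Lemma TGedge_unicycle_cycle_edge w F x :
  G_simple_cycle E w -> forest E [set y in w] F -> TGedge E x ->
  unicycle x = F :|: cycle_edges w -> x.2 \in cycle_edges w.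
Proof.
case/and3P => wn Uw _ _ Tx ux; have x1 := TGedge_src Tx.
case/and3P: Tx => /existsP [r /and3P [_ acy _]] _ _.
apply: contraT => x2C; have : cycle_edges w \subset x.1.
  by rewrite x1 ux subsetD1 subsetUr x2C.
by move/(acyclicN_cycle_edges wn Uw); rewrite acy.
Qed.

Lemma unicycle_fiber w F : G_simple_cycle E w -> forest E [set y in w] F ->
  [set x in TGedges | unicycle x == F :|: cycle_edges w]
  = lift_cycle F (cycle_edges w).
Proof.
move=> Gw Fw; apply/setP => x; rewrite !inE.
apply/andP/imsetP => [[Tx /eqP ux] | [f fC ->]].
  exists x.2; first exact: TGedge_unicycle_cycle_edge Tx ux.
  by rewrite -ux -(TGedge_src Tx) -surjective_pairing.
by rewrite TGedge_lift // unicycle_lift.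
Qed.

Lemma unicycle_decomp x : TGedge E x ->
  exists w, [/\ G_simple_cycle E w, cycle_edges w \subset unicycle x &
                forest E [set y in w] (unicycle x :\: cycle_edges w)].
Proof.
move=> Tx; have gF := TGedge_functional Tx.
case: x Tx gF => a [u t] /and3P [/existsP [r Fr] tE /= u0] gF.
have ur := forest1_outdeg0 Fr u0; subst r; set g := unicycle _ in gF *.
have ag : a \subset g := subsetUl _ _.
have gE : g \subset E by rewrite subUset (forest_sub Fr) sub1set.
have ug : (u, t) \in g by rewrite in_setU set11 orbT.
have [_ /set1P -> /connectP [p pth]] := forest_connect_root t Fr.
case: (shortenP pth) => p' pth' Uw _ ul; set w := t :: p' in Uw *.
have uw : u \in w by rewrite ul mem_last.
have Cg : cycle_edges w \subset g.
  rewrite cycle_edges_subE //= rcons_path /edge_rel -ul ug andbT.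
  by apply: sub_path pth' => ? ? /(subsetP ag).
exists w; split => //.
  by apply/and3P; split => //; rewrite -cycle_edges_subE // (subset_trans Cg gE).
apply/and3P; split.
- exact: subset_trans (subsetDl _ _) gE.
- apply: acyclicS (forest_acyclic Fr); apply/subsetP => z; rewrite in_setD.
  case/andP => zC; rewrite in_setU => /orP [//|/set1P zu]; move: zC.
  have Cu : (u, next w u) \in g.
    by apply: (subsetP Cg); rewrite in_cycle_edges uw eqxx.
  by rewrite zu -(functional_eq gF Cu ug) // in_cycle_edges uw eqxx.
- by apply/forallP => v; rewrite inE functional_outdeg_setD_cycle_edges.
Qed.

Lemma unicycle_block x : x \in TGedges ->
  exists w F, [/\ G_simple_cycle E w, forest E [set y in w] F &
    [set y in TGedges | unicycle x == unicycle y] = lift_cycle F (cycle_edges w)].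
Proof.
rewrite inE => Tx; have [w [Gw Cx Fw]] := unicycle_decomp Tx.
exists w, (unicycle x :\: cycle_edges w); split => //.
have ux : unicycle x = (unicycle x :\: cycle_edges w) :|: cycle_edges w.
  by rewrite setDE setUIl (setUC (~: _)) setUCr setIT; apply/esym/setUidPl.
by rewrite -(unicycle_fiber Gw Fw) -ux; apply/setP => y; rewrite !inE eq_sym.
Qed.

Lemma lift_cycle_TG_simple_cycle w F :
  G_simple_cycle E w -> forest E [set y in w] F ->
  exists2 s, TG_simple_cycle E s & lift_cycle F (cycle_edges w) = [set x in s].
Proof.
move=> Gw Fw; have /and3P [wn Uw _] := Gw.
set C := cycle_edges w; set g := F :|: C.
have gF : functional g := forest_cycle_functional Fw.
have Cg v : v \in w -> (v, next w v) \in g.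
  by move=> vw; rewrite in_setU in_cycle_edges vw eqxx orbT.
pose lift v := (g :\ (v, next w v), (v, next w v)).
exists (map lift w); last first.
  apply/setP => y; rewrite inE; apply/imsetP/mapP => [[[a b]] | [v vw ->]].
    by rewrite in_cycle_edges => /andP [aw /eqP ->] ->; exists a.
  by exists (v, next w v); rewrite // in_cycle_edges vw eqxx.
apply/and4P; split.
- by case: (w) wn.
- apply/allP => _ /mapP [v vw ->].
  by apply: TGedge_lift; rewrite // in_cycle_edges vw eqxx.
- rewrite cycle_map; apply: (@sub_in_cycle _ (mem w) (fun x y => next w x == y)).
  + move=> v _ vw _ /eqP <-; rewrite /relpre /=.
    have vE : (v, next w v) \in E.
      by apply: (subsetP (G_simple_cycle_sub Gw)); rewrite in_cycle_edges vw eqxx.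
    have nvw : next w v \in w by rewrite mem_next.
    rewrite (TGtarget_lift gF (Cg _ vw) (Cg _ nvw)) //=.
    by apply/eqP => nv; move: (loopless v); rewrite -{2}nv vE.
  + exact/allP.
  + exact: cycle_next.
- rewrite -map_comp map_inj_in_uniq // => v1 v2 v1w v2w /= e.
  apply/eqP; apply: contraT => v12.
  have : (v1, next w v1) \in g :\ (v2, next w v2).
    by rewrite in_setD1 Cg // andbT xpair_eqE (negbTE v12).
  by rewrite -e in_setD1 eqxx.
Qed.

Lemma blocks_above_cycle w : G_simple_cycle E w ->
  [set B in preim_partition unicycle TGedges | [set proj x | x in B] == cycle_edges w]
  = [set lift_cycle F (cycle_edges w) | F in [set F | forest E [set y in w] F]].
Proof.
move=> Gw; apply/setP => B; rewrite inE; apply/andP/imsetP.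
  case=> /imsetP [x Tx ->] /eqP pB.
  have [w' [F [Gw' Fw' eB]]] := unicycle_block Tx.
  move: pB; rewrite eB proj_lift_cycle => eC.
  exists F; last by rewrite eC.
  suff <- : [set y in w'] = [set y in w] by rewrite inE.
  by apply/setP => y; rewrite !inE (cycle_edges_mem eC).
move=> [F]; rewrite inE => Fw ->; split; last by rewrite proj_lift_cycle.
have /and3P [wn _ _] := Gw; have /set0Pn [f fC] := cycle_edges_neq0 wn.
apply/imsetP; exists ((F :|: cycle_edges w) :\ f, f).
  by rewrite inE TGedge_lift.
rewrite unicycle_lift // -(unicycle_fiber Gw Fw).
by apply/setP => y; rewrite !inE eq_sym.
Qed.

End OverGraph.
End TreeGraph.

Theorem mainTheorem4 (V : finType) (E : {set V * V})
    (loopless : forall v : V, (v, v) \notin E) :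
  exists P : {set {set {set V * V} * (V * V)}},
    [/\ partition P [set x | TGedge E x],
        (forall B, B \in P ->
           (exists s, TG_simple_cycle E s /\ B = [set x in s]) /\
           (exists w, G_simple_cycle E w /\ {in B &, injective (@proj V)} /\
                      [set proj x | x in B] = cycle_edges w))
      & (forall w : seq V, G_simple_cycle E w ->
           #|[set B in P | [set proj x | x in B] == cycle_edges w]|
           = #|[set F : {set V * V} | forest E [set x in w] F]|)].
Proof.
exists (preim_partition (@unicycle V) [set x | TGedge E x]); split.
- exact: preim_partitionP.
- move=> B /imsetP [x Tx ->]; have [w [F [Gw Fw ->]]] := unicycle_block Tx.
  split; first by have [s Ts ->] := lift_cycle_TG_simple_cycle loopless Gw Fw; exists s.
  exists w; split => //; split; [exact: proj_lift_cycle_inj | exact: proj_lift_cycle].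
- move=> w Gw; rewrite blocks_above_cycle // card_in_imset // => F1 F2.
  rewrite !inE => F1w F2w; apply: lift_cycle_inj.
  + by case/and3P: Gw => wn _ _; apply: cycle_edges_neq0.
  + exact: forest_disjoint_cycle_edges F1w.
  + exact: forest_disjoint_cycle_edges F2w.
Qed.
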